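(* Fix $j$ with $\ell+1\le j\le n$, a nonzero linear form $\alpha_j=\sum_{i=1}^{\ell}a_{ji}x_i\in S=\mathbb{K}[x_1,\dots,x_\ell]$. Let $M_j\subseteq S^\ell$ be the $S$-module of all tuples $(k_1,\dots,k_\ell)\in S^\ell$ for which there exists $k_j\in S$ with $$k_j\,\alpha_j=\sum_{i=1}^{\ell}k_i\,a_{ji}x_i .$$ Then $M_j$ is generated as an $S$-module by the set $$G_j=\{e\}\cup\{e_r : a_{jr}=0\}\cup\{a_{jt}x_t\,e_s-a_{js}x_s\,e_t : a_{jt}a_{js}\neq 0\},$$ where $e=(1,1,\dots,1)$ and $e_r$ is the $r$-th standard basis vector of $S^\ell$.
   Context: This is the $j$-th equation of the system $k_j\alpha_j=\sum_{i=1}^\ell k_i(a_{ji}x_i)$, $\ell+1\le j\le n$, arising (via Theorem 2.1 / Corollary 2.2 of the paper) for an arrangement with canonical defining polynomial $Q=x_1\cdots x_\ell\,\alpha_{\ell+1}\cdots\alpha_n$, where $\theta(x_i)=k_ix_i$ and $\theta(\alpha_j)=k_j\alpha_j$ for a logarithmic derivation $\theta$. *)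

From HB Require Import structures.
From mathcomp Require Import all_boot all_order all_algebra.
Set Implicit Arguments. Unset Strict Implicit. Unset Printing Implicit Defensive.
Import Order.TTheory GRing.Theory Num.Theory.
Local Open Scope ring_scope.

(* S = K[x_0, ..., x_(n-1)], built as iterated univariate polynomial rings:
   K[x_0,...,x_(n-1)] = (K[x_0,...,x_(n-2)])[x_(n-1)]. *)
Fixpoint mpoly (K : fieldType) (n : nat) : idomainType :=
  match n with
  | 0 => K
  | n'.+1 => {poly mpoly K n'}
  end.

(* the variable x_i of mpoly K n (0 when i >= n) *)
Fixpoint mX (K : fieldType) (n : nat) (i : nat) : mpoly K n :=
  match n return mpoly K n with
  | 0 => 0
  | n'.+1 => if i == n' then 'X else (mX K n' i)%:P
  end.

Fixpoint mC (K : fieldType) (n : nat) (c : K) : mpoly K n :=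
  match n return mpoly K n with
  | 0 => c
  | n'.+1 => (mC n' c)%:P
  end.

Definition lin_form (K : fieldType) (l : nat) (a : 'I_l -> K) : mpoly K l :=
  \sum_(i < l) mC l (a i) * mX K l i.

Definition in_Mj (K : fieldType) (l : nat) (a : 'I_l -> K)
  (k : 'rV[mpoly K l]_l) : Prop :=
  exists kj : mpoly K l,
    kj * lin_form a = \sum_(i < l) k 0 i * (mC l (a i) * mX K l i).

Definition e_all (K : fieldType) (l : nat) : 'rV[mpoly K l]_l := const_mx 1.
Definition e_std (K : fieldType) (l : nat) (r : 'I_l) : 'rV[mpoly K l]_l :=
  delta_mx 0 r.

Definition g_pair (K : fieldType) (l : nat) (a : 'I_l -> K) (s t : 'I_l)
  : 'rV[mpoly K l]_l :=
  (mC l (a t) * mX K l t) *: e_std K s - (mC l (a s) * mX K l s) *: e_std K t.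

Definition in_span_Gj (K : fieldType) (l : nat) (a : 'I_l -> K)
  (k : 'rV[mpoly K l]_l) : Prop :=
  exists (c0 : mpoly K l) (c1 : 'I_l -> mpoly K l) (c2 : 'I_l -> 'I_l -> mpoly K l),
    k = c0 *: e_all K l
        + \sum_(r < l | a r == 0) c1 r *: e_std K r
        + \sum_(s < l) \sum_(t < l | (a t * a s != 0)) c2 s t *: g_pair a s t.

From HB Require Import structures.
From mathcomp Require Import all_boot all_order all_algebra.
Import GRing.Theory.
Local Open Scope ring_scope.

(* Lemma 2.4.  Write y_i = a_i x_i.  A tuple k lies in M_j iff
   k - k_j e is a syzygy of (y_0, ..., y_(l-1)); hence M_j = S e + Syz(y), and
   the theorem reduces to the fact that Syz(y) is generated by the unit vectors
   e_r with a_r = 0 and the Koszul relations y_t e_s - y_s e_t.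

   That fact is proved for the first m <= n terms over S_n = K[x_0..x_(n-1)]
   by induction on n, using S_(n+1) = S_n[x_n]:
   - if m <= n, no term involves x_n, so a syzygy splits coefficientwise in x_n
     into syzygies over S_n (induction on the degree in x_n);
   - if m = n+1 and a_n = 0, the last coordinate is a free multiple of e_n;
   - if m = n+1 and a_n <> 0, subtracting multiples of the Koszul relations
     (j, n) removes x_n from the other coordinates; the last coordinate is then
     forced to vanish and the rest is a syzygy over S_n. *)

Section Syzygies.
Variable K : fieldType.

Lemma mC0 n : mC n (0 : K) = 0.
Proof. by elim: n => //= n ->. Qed.

Lemma mC1 n : mC n (1 : K) = 1.
Proof. by elim: n => //= n ->. Qed.

Lemma mCM n (x y : K) : mC n (x * y) = mC n x * mC n y.
Proof. by elim: n => //= n ->; rewrite polyCM. Qed.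

Lemma mC_eq0 n (x : K) : (mC n x == 0) = (x == 0).
Proof. by elim: n => //= n <-; rewrite polyC_eq0. Qed.

Definition term n (c : nat -> K) (i : nat) : mpoly K n := mC n (c i) * mX K n i.

Definition syzygy n m c (f : nat -> mpoly K n) : Prop :=
  \sum_(i < m) f i * term n c i = 0.

Definition koszul n c (s t : nat) (i : nat) : mpoly K n :=
  (if i == s then term n c t else 0) - (if i == t then term n c s else 0).

(* The S_n-submodule of coordinate functions (read on 0 .. m-1) generated by
   the unit vectors e_r with c_r = 0 and the Koszul relations. *)
Inductive generated n m c : (nat -> mpoly K n) -> Prop :=
| gen0 : generated n m c (fun _ => 0)
| genD f g : generated n m c f -> generated n m c g ->
    generated n m c (fun i => f i + g i)
| genZ h f : generated n m c f -> generated n m c (fun i => h * f i)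
| genE r : (r < m)%N -> c r = 0 ->
    generated n m c (fun i => if i == r then 1 else 0)
| genK s t : (s < m)%N -> (t < m)%N -> generated n m c (koszul n c s t)
| genX f g : generated n m c f -> (forall i, (i < m)%N -> f i = g i) ->
    generated n m c g.
Arguments gen0 {n m c}.
Arguments genD {n m c f g}.
Arguments genZ {n m c} h {f}.
Arguments genE {n m c} r.
Arguments genK {n m c} s t.
Arguments genX {n m c f g}.

Lemma sum_delta {R : nmodType} {m i : nat} (F : nat -> R) : (i < m)%N ->
  \sum_(j < m) (if i == j then F j else 0) = F i.
Proof.
move=> im; rewrite -big_mkcond (eq_bigl (fun j : 'I_m => j == i :> nat)).
  by rewrite big_ord1_eq im.
by move=> j; rewrite eq_sym.
Qed.

(* A Koszul relation whose second coefficient vanishes is a multiple of a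
   unit vector; with antisymmetry this covers the degenerate pairs. *)
Lemma koszul_zero_right n c s t i : c t = 0 ->
  koszul n c s t i = - term n c s * (if i == t then 1 else 0).
Proof.
move=> ct; rewrite /koszul {1}/term ct mC0 mul0r if_same sub0r.
by case: (i == t); rewrite ?mulr1 ?mulr0 ?oppr0.
Qed.

Lemma koszul_antisym n c s t i : koszul n c s t i = - koszul n c t s i.
Proof. by rewrite /koszul opprB. Qed.

Lemma generated_syzygy n m c f : generated n m c f -> syzygy n m c f.
Proof.
rewrite /syzygy; elim => {f}.
- by rewrite big1 // => i _; rewrite mul0r.
- move=> f g _ Hf _ Hg.
  by under eq_bigr do rewrite mulrDl; rewrite big_split /= Hf Hg addr0.
- move=> h f _ Hf.
  by under eq_bigr do rewrite -mulrA; rewrite -mulr_sumr Hf mulr0.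
- move=> r rm cr.
  under eq_bigr => j _ do rewrite (fun_if (fun x => x * _)) mul1r mul0r eq_sym.
  by rewrite (sum_delta (fun j => term n c j)) // /term cr mC0 mul0r.
- move=> s t sm tm.
  under eq_bigr => j _ do
    rewrite mulrBl !(fun_if (fun x => x * _)) !mul0r
            (eq_sym (nat_of_ord j) s) (eq_sym (nat_of_ord j) t).
  rewrite sumrB (sum_delta (fun j => term n c t * term n c j)) //.
  by rewrite (sum_delta (fun j => term n c s * term n c j)) // mulrC subrr.
- by move=> f g _ Hf fg; rewrite -[RHS]Hf; apply: eq_bigr => i _; rewrite fg.
Qed.
Arguments generated_syzygy {n m c f}.

Lemma term_lift n c i : (i < n)%N -> term n.+1 c i = (term n c i)%:P.
Proof. by move=> lt; rewrite /term /= (ltn_eqF lt) polyCM. Qed.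

Lemma term_last n c : term n.+1 c n = (mC n (c n))%:P * 'X.
Proof. by rewrite /term /= eqxx. Qed.

Lemma generated_sum n m c k (F : nat -> nat -> mpoly K n) :
  (forall j, (j < k)%N -> generated n m c (F j)) ->
  generated n m c (fun i => \sum_(j < k) F j i).
Proof.
elim: k => [|k IH] H; first by apply: genX gen0 _ => i _; rewrite big_ord0.
apply: genX (genD (IH _) (H k _)) _ => // [j jk|i _]; first exact/H/ltnW.
by rewrite big_ord_recr.
Qed.
Arguments generated_sum {n m c k} F.

Lemma generated_lift n m c (f : nat -> mpoly K n) : (m <= n)%N ->
  generated n m c f -> generated n.+1 m c (fun i => (f i)%:P).
Proof.
move=> mn; elim => {f}.
- by apply: genX gen0 _.
- by move=> f g _ Hf _ Hg; apply: genX (genD Hf Hg) _ => i _; rewrite polyCD.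
- move=> h f _ Hf.
  by apply: genX (genZ (h%:P : mpoly K n.+1) Hf) _ => i _; rewrite polyCM.
- by move=> r rm cr; apply: genX (genE _ rm cr) _ => i _; case: (i == r).
- move=> s t sm tm; apply: genX (genK _ _ sm tm) _ => i _.
  rewrite /koszul !term_lift ?(leq_trans _ mn) // polyCB.
  by case: (i == s); case: (i == t); rewrite ?polyC0.
- by move=> f g _ Hf fg; apply: genX Hf _ => i im; rewrite fg.
Qed.
Arguments generated_lift {n m c f}.

Lemma generated_widen n m m' c (f : nat -> mpoly K n) : (m <= m')%N ->
  generated n m c f ->
  generated n m' c (fun i => if (i < m)%N then f i else 0).
Proof.
move=> mm; elim => {f}.
- by apply: genX gen0 _ => i _; case: ifP.
- move=> f g _ Hf _ Hg.
  by apply: genX (genD Hf Hg) _ => i _; case: ifP; rewrite ?addr0.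
- by move=> h f _ Hf; apply: genX (genZ h Hf) _ => i _; case: ifP; rewrite ?mulr0.
- move=> r rm cr; apply: genX (genE _ (leq_trans rm mm) cr) _ => i _.
  case im: (i < m)%N => //; case: (i =P r) => [ir|//]; by move: im; rewrite ir rm.
- move=> s t sm tm.
  apply: genX (genK _ _ (leq_trans sm mm) (leq_trans tm mm)) _ => i _.
  case: ifP => // im; rewrite /koszul.
  case: (i =P s) => [eis|_]; first by rewrite eis sm in im.
  by case: (i =P t) => [eit|_]; [rewrite eit tm in im | rewrite subr0].
- by move=> f g _ Hf fg; apply: genX Hf _ => i _; case: ifP => // im; exact: fg.
Qed.
Arguments generated_widen {n m m' c f}.

Lemma poly_head_tail (R : nzRingType) (p : {poly R}) :
  p = (p`_0)%:P + drop_poly 1 p * 'X.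
Proof.
rewrite -{1}(poly_take_drop 1 p) expr1; congr (_ + _).
by apply/polyP => k; rewrite coef_take_poly coefC; case: k.
Qed.

(* When m <= n the terms do not involve x_n, so being a syzygy over S_n[x_n]
   is a coefficientwise condition. *)
Lemma syzygy_coefE n m c (f : nat -> {poly mpoly K n}) : (m <= n)%N ->
  syzygy n.+1 m c f <-> forall k, syzygy n m c (fun i => (f i)`_k).
Proof.
move=> mn; have coef_sum_terms k :
    (\sum_(i < m) f i * term n.+1 c i)`_k = \sum_(i < m) (f i)`_k * term n c i.
  rewrite coef_sum; apply: eq_bigr => i _.
  by rewrite term_lift ?coefMC // (leq_trans _ mn).
split => [H k | H]; first by rewrite /syzygy -coef_sum_terms H coef0.
by apply/polyP => k; rewrite coef_sum_terms H coef0.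
Qed.
Arguments syzygy_coefE {n m c f}.

Definition syzygies_generated n :=
  forall m c f, (m <= n)%N -> syzygy n m c f -> generated n m c f.

Section InductionStep.
Variable n : nat.
Hypothesis IH : syzygies_generated n.

(* Case m <= n: induction on the x_n-degree bound, splitting off the constant
   coefficient and dividing the rest by x_n. *)
Lemma generated_free_var m c (f : nat -> {poly mpoly K n}) : (m <= n)%N ->
  syzygy n.+1 m c f -> generated n.+1 m c f.
Proof.
move=> mn; pose N := (\max_(i < m) size (f i))%N.
have : forall i, (i < m)%N -> (size (f i) <= N)%N.
  by move=> i im; exact: (@leq_bigmax _ (fun j : 'I_m => size (f j)) (Ordinal im)).
clearbody N; elim: N f => [|N IHN] f Hs Hsyz.
  apply: genX gen0 _ => i im; apply/esym/eqP.
  by rewrite -size_poly_eq0 -leqn0 Hs.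
have H0 : generated n.+1 m c (fun i => ((f i)`_0)%:P).
  apply: generated_lift => //; apply: IH => //.
  exact: (proj1 (syzygy_coefE mn) Hsyz 0).
have H1 : generated n.+1 m c (fun i => drop_poly 1 (f i)).
  apply: IHN => [i im|]; first by rewrite size_drop_poly leq_subLR add1n Hs.
  apply/(syzygy_coefE mn) => k; rewrite /syzygy.
  under eq_bigr do rewrite coef_drop_poly addn1.
  exact: (proj1 (syzygy_coefE mn) Hsyz).
apply: genX (genD H0 (genZ ('X : mpoly K n.+1) H1)) _ => i im.
by rewrite [RHS]poly_head_tail mulrC.
Qed.
Arguments generated_free_var {m c f}.

(* Case m = n+1 with c_n = 0: the last coordinate is a multiple of e_n. *)
Lemma generated_last_zero c (f : nat -> {poly mpoly K n}) : c n = 0 ->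
  syzygy n.+1 n.+1 c f -> generated n.+1 n.+1 c f.
Proof.
move=> cn0 Hsyz.
have Hs : syzygy n.+1 n c f.
  by move: Hsyz; rewrite /syzygy big_ord_recr /= term_last cn0 mC0 !mul0r mulr0 addr0.
have Hw := generated_widen (leqnSn n) (generated_free_var (leqnn n) Hs).
apply: genX (genD Hw (genZ (f n : mpoly K n.+1) (genE n (ltnSn n) cn0))) _ => i.
rewrite ltnS leq_eqVlt => /orP [/eqP ->|lt]; first by rewrite ltnn eqxx mulr1 add0r.
by rewrite lt (ltn_eqF lt) mulr0 addr0.
Qed.

(* Case m = n+1 with c_n <> 0, first step: subtracting a combination of the
   Koszul relations (j, n), j < n, makes the first n coordinates constant
   in x_n. *)
Lemma koszul_reduction c (f : nat -> {poly mpoly K n}) : c n != 0 ->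
  exists2 S, generated n.+1 n.+1 c S &
    forall i, (i < n)%N -> f i - S i = ((f i)`_0)%:P.
Proof.
move=> cn0; pose q j : mpoly K n.+1 := (mC n (c n)^-1)%:P * drop_poly 1 (f j).
exists (fun i => \sum_(j < n) q j * koszul n.+1 c j n i).
  apply: (generated_sum (fun j i => q j * koszul n.+1 c j n i)) => j jn.
  by apply/genZ/genK => //; exact: ltnW.
move=> i lt.
under eq_bigr => j _ do
  rewrite /koszul (ltn_eqF lt) subr0 (fun_if (fun x => _ * x)) mulr0.
rewrite (sum_delta (fun j => q j * term n.+1 c n)) // term_last /q.
rewrite mulrA [_ * drop_poly _ _ * _]mulrC mulrA -polyCM -mCM mulfV //.
by rewrite mC1 polyC1 mul1r {1}[f i]poly_head_tail addrK.
Qed.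

Lemma syzygy_constant_part {c} {g : nat -> {poly mpoly K n}} {h : nat -> mpoly K n} :
  c n != 0 -> (forall i, (i < n)%N -> g i = (h i)%:P) ->
  syzygy n.+1 n.+1 c g -> g n = 0 /\ syzygy n n c h.
Proof.
move=> cn0 gh; rewrite /syzygy big_ord_recr /= term_last.
under eq_bigr => i _ do rewrite gh // term_lift // -polyCM.
rewrite -rmorph_sum => Hg.
have Hh : \sum_(i < n) h i * term n c i = 0.
  move/(congr1 (fun p : {poly mpoly K n} => p`_0)): Hg.
  by rewrite coefD mulrA coefMX coefC addr0 coef0.
split => //; move: Hg; rewrite Hh rmorph0 add0r => /eqP.
by rewrite !mulf_eq0 polyC_eq0 mC_eq0 (negbTE cn0) polyX_eq0 !orbF => /eqP.
Qed.

Lemma generated_last_unit c (f : nat -> {poly mpoly K n}) : c n != 0 ->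
  syzygy n.+1 n.+1 c f -> generated n.+1 n.+1 c f.
Proof.
move=> cn0 Hsyz; have [S HS fS] := koszul_reduction c f cn0.
pose g i := f i - S i.
have Hg : syzygy n.+1 n.+1 c g.
  move: Hsyz (generated_syzygy HS); rewrite /syzygy => H1 H2.
  by under eq_bigr do rewrite mulrBl; rewrite sumrB H1 H2 subr0.
have [gn Hh] := syzygy_constant_part cn0 fS Hg.
have Hw := generated_widen (leqnSn n)
  (generated_lift (leqnn n) (IH _ _ _ (leqnn n) Hh)).
apply: genX (genD Hw HS) _ => i; rewrite ltnS leq_eqVlt => /orP [/eqP ->|lt].
  by rewrite ltnn add0r -[S n]add0r -gn subrK.
by rewrite lt -fS // subrK.
Qed.

End InductionStep.

Theorem syzygies_generated_all n : syzygies_generated n.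
Proof.
elim: n => [|n IH] m c f.
  by rewrite leqn0 => /eqP -> _; apply: genX gen0 _.
rewrite leq_eqVlt ltnS => /orP [/eqP ->|mn]; last exact: generated_free_var.
have [cn0|cn0] := eqVneq (c n) 0.
  exact: generated_last_zero.
exact: generated_last_unit.
Qed.

End Syzygies.
Arguments term {K}.
Arguments syzygy {K}.
Arguments koszul {K}.
Arguments generated {K}.

Section RowVectors.
Variables (K : fieldType) (l : nat) (a : 'I_l -> K).
Local Notation S := (mpoly K l).

Definition coef_seq (i : nat) : K := if insub i is Some j then a j else 0.

Lemma coef_seqE (j : 'I_l) : coef_seq j = a j.
Proof. by rewrite /coef_seq valK. Qed.

Lemma term_ord (j : 'I_l) : term l coef_seq j = mC l (a j) * mX K l j.
Proof. by rewrite /term coef_seqE. Qed.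

Lemma e_stdE (r j : 'I_l) : e_std K r 0 j = (j == r)%:R.
Proof. by rewrite /e_std mxE eqxx. Qed.

Lemma ord_eqE (u v : 'I_l) : (nat_of_ord u == nat_of_ord v) = (u == v).
Proof. by []. Qed.

Lemma g_pairE (s t j : 'I_l) : g_pair a s t 0 j = koszul l coef_seq s t j.
Proof.
rewrite /g_pair !mxE eqxx /koszul !term_ord /= !ord_eqE.
by case: (j == s); case: (j == t); rewrite ?mulr1 ?mulr0 ?subr0 ?sub0r.
Qed.

Definition gen_row (c1 : 'I_l -> S) (c2 : 'I_l -> 'I_l -> S) : 'rV[S]_l :=
  \sum_(r < l | a r == 0) c1 r *: e_std K r
  + \sum_(s < l) \sum_(t < l | a t * a s != 0) c2 s t *: g_pair a s t.

Definition expressible (f : nat -> S) : Prop :=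
  exists c1 c2, forall j : 'I_l, f j = gen_row c1 c2 0 j.

Lemma expressible0 : expressible (fun _ => 0).
Proof.
exists (fun _ => 0), (fun _ _ => 0) => j.
rewrite /gen_row big1 ?add0r => [|r _]; last by rewrite scale0r.
by rewrite big1 ?mxE // => s _; rewrite big1 // => t _; rewrite scale0r.
Qed.

Lemma gen_rowD c1 c2 d1 d2 :
  gen_row (fun r => c1 r + d1 r) (fun s t => c2 s t + d2 s t)
  = gen_row c1 c2 + gen_row d1 d2.
Proof.
rewrite /gen_row addrACA -!big_split; congr (_ + _).
  by apply: eq_bigr => r _; rewrite scalerDl.
by apply: eq_bigr => s _; rewrite -big_split; apply: eq_bigr => t _; rewrite scalerDl.
Qed.

Lemma gen_rowZ h c1 c2 :
  gen_row (fun r => h * c1 r) (fun s t => h * c2 s t) = h *: gen_row c1 c2.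
Proof.
rewrite /gen_row scalerDr !scaler_sumr; congr (_ + _).
  by apply: eq_bigr => r _; rewrite scalerA.
by apply: eq_bigr => s _; rewrite scaler_sumr; apply: eq_bigr => t _; rewrite scalerA.
Qed.

Lemma expressibleD f g :
  expressible f -> expressible g -> expressible (fun i => f i + g i).
Proof.
move=> [c1 [c2 Hf]] [d1 [d2 Hg]]; exists (fun r => c1 r + d1 r).
by exists (fun s t => c2 s t + d2 s t) => j; rewrite gen_rowD Hf Hg [in RHS]mxE.
Qed.
Arguments expressibleD {f g}.

Lemma expressibleZ h f : expressible f -> expressible (fun i => h * f i).
Proof.
move=> [c1 [c2 Hf]]; exists (fun r => h * c1 r).
by exists (fun s t => h * c2 s t) => j; rewrite gen_rowZ Hf [in RHS]mxE.
Qed.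
Arguments expressibleZ h {f}.

Lemma expressibleX (f g : nat -> S) :
  expressible f -> (forall j : 'I_l, f j = g j) -> expressible g.
Proof. by move=> [c1 [c2 Hf]] fg; exists c1, c2 => j; rewrite -fg. Qed.
Arguments expressibleX {f g}.

Lemma expressibleE (r0 : 'I_l) : a r0 = 0 ->
  expressible (fun i => if i == r0 then 1 else 0).
Proof.
move=> ar; exists (fun r => if r == r0 then 1 else 0), (fun _ _ => 0) => j.
rewrite /gen_row [X in _ + X]big1 => [|s _]; last first.
  by rewrite big1 // => t _; rewrite scale0r.
rewrite addr0 (bigD1 r0) ?ar //= eqxx scale1r big1 ?addr0 => [|r /andP [_ /negbTE ->]].
  by rewrite e_stdE ord_eqE; case: (_ == _).
by rewrite scale0r.
Qed.
Arguments expressibleE {r0}.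

Lemma expressibleK (s0 t0 : 'I_l) : a t0 * a s0 != 0 ->
  expressible (koszul l coef_seq s0 t0).
Proof.
move=> ast; exists (fun _ => 0).
exists (fun s t => if s == s0 then (if t == t0 then 1 else 0) else 0) => j.
rewrite /gen_row big1 ?add0r => [|r _]; last by rewrite scale0r.
rewrite (bigD1 s0) //= (bigD1 t0) //= !eqxx scale1r.
rewrite big1 ?addr0 => [|t /andP [_ /negbTE ->]]; last by rewrite scale0r.
rewrite big1 ?addr0 ?g_pairE // => s /negbTE ->.
by rewrite big1 // => t _; rewrite scale0r.
Qed.

Lemma generated_expressible f : generated l l coef_seq f -> expressible f.
Proof.
elim => {f}.
- exact: expressible0.
- by move=> f g _ Hf _ Hg; apply: expressibleD.
- by move=> h f _ Hf; apply: expressibleZ.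
- move=> r rl cr; have ar : a (Ordinal rl) = 0 by rewrite -coef_seqE.
  by apply: expressibleX (expressibleE ar) _.
- move=> s t sl tl; pose s0 := Ordinal sl; pose t0 := Ordinal tl.
  have [ast|] := boolP (a t0 * a s0 != 0); first exact: expressibleK ast.
  rewrite negbK mulf_eq0 => /orP [/eqP at0|/eqP as0].
    have ct : coef_seq t = 0 by rewrite -at0 -coef_seqE.
    apply: expressibleX (expressibleZ (- term l coef_seq s) (expressibleE at0)) _.
    by move=> j; rewrite koszul_zero_right.
  have cs : coef_seq s = 0 by rewrite -as0 -coef_seqE.
  apply: expressibleX (expressibleZ (term l coef_seq t) (expressibleE as0)) _.
  by move=> j; rewrite koszul_antisym koszul_zero_right // mulNr opprK.
- by move=> f g _ Hf fg; apply: expressibleX Hf _ => j; apply: fg.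
Qed.

Definition syz_form (v : 'rV[S]_l) : S := \sum_(i < l) v 0 i * (mC l (a i) * mX K l i).

Lemma syz_formD : {morph syz_form : x y / x + y >-> x + y}.
Proof.
by move=> x y; rewrite /syz_form -big_split; apply: eq_bigr => i _; rewrite mxE mulrDl.
Qed.

Lemma syz_form0 : syz_form 0 = 0.
Proof. by rewrite /syz_form big1 // => i _; rewrite mxE mul0r. Qed.

Lemma syz_formZ h v : syz_form (h *: v) = h * syz_form v.
Proof. by rewrite /syz_form mulr_sumr; apply: eq_bigr => i _; rewrite mxE -mulrA. Qed.

Lemma syz_form_sum (I : Type) (r : seq I) (P : pred I) (F : I -> 'rV[S]_l) :
  syz_form (\sum_(i <- r | P i) F i) = \sum_(i <- r | P i) syz_form (F i).
Proof. exact: (big_morph syz_form syz_formD syz_form0). Qed.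

Lemma syz_form_e_std r : syz_form (e_std K r) = mC l (a r) * mX K l r.
Proof.
rewrite /syz_form (bigD1 r) //= e_stdE eqxx mul1r big1 ?addr0 // => i /negbTE ir.
by rewrite e_stdE ir mul0r.
Qed.

Lemma syz_form_e_all : syz_form (e_all K l) = lin_form a.
Proof. by apply: eq_bigr => i _; rewrite /e_all mxE mul1r. Qed.

Lemma syz_form_gen_row c1 c2 : syz_form (gen_row c1 c2) = 0.
Proof.
rewrite syz_formD !syz_form_sum big1 ?add0r => [|r /eqP ar]; last first.
  by rewrite syz_formZ syz_form_e_std ar mC0 !mul0r mulr0.
rewrite big1 // => s _; rewrite syz_form_sum big1 // => t _.
rewrite /g_pair syz_formZ syz_formD -scaleNr !syz_formZ !syz_form_e_std.
by rewrite mulNr [X in X - _]mulrC subrr mulr0.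
Qed.

End RowVectors.
Arguments coef_seq {K l}.
Arguments term_ord {K l}.
Arguments gen_row {K l}.
Arguments generated_expressible {K l a f}.
Arguments syz_form {K l}.

(* Lemma 2.4: M_j is generated by e, the e_r with a_r = 0 and the pairs
   a_t x_t e_s - a_s x_s e_t with a_t a_s <> 0. *)
Theorem lemma2p4 (K : fieldType) (l : nat) (a : 'I_l -> K)
  (ha : exists i, a i != 0) :
  forall k : 'rV[mpoly K l]_l, in_Mj a k <-> in_span_Gj a k.
Proof.
move=> k; split.
- move=> [kj Hk].
  (* k - k_j e is a syzygy of the terms a_i x_i *)
  pose f i := if insub i is Some j then k 0 j - kj else 0.
  have Hf : syzygy l l (coef_seq a) f.
    rewrite /syzygy; under eq_bigr => i _ do rewrite /f valK term_ord mulrBl.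
    by rewrite sumrB -Hk -mulr_sumr subrr.
  have [c1 [c2 Hc]] :=
    generated_expressible (@syzygies_generated_all K l l _ _ (leqnn l) Hf).
  exists kj, c1, c2; apply/matrixP => i j.
  rewrite (ord1 i) -addrA -/(gen_row a c1 c2) mxE -Hc /f valK /e_all !mxE.
  by rewrite mulr1 addrC subrK.
- move=> [c0 [c1 [c2 ->]]]; exists c0.
  rewrite -addrA -/(syz_form a _) syz_formD syz_formZ syz_form_gen_row addr0.
  by rewrite syz_form_e_all.
Qed.
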